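(* Let $\sigma\in\{1,-1\}$ and let $U$ be an open subset of the Weyl upper half-plane. Let $\natural$ be an involutive map on $n\times n$ matrix functions on $U$ (applied coefficientwise to matrix-valued one-forms) such that $(N_1N_2)^\natural=N_2^\natural N_1^\natural$, $(N_1+N_2)^\natural=N_1^\natural+N_2^\natural$, $(fN)^\natural=f^\natural N^\natural$ for scalar functions $f$, where $f\mapsto f^\natural$ is either the identity or complex conjugation, $\partial_\rho(N^\natural)=(\partial_\rho N)^\natural$, $\partial_v(N^\natural)=(\partial_vN)^\natural$, and $\natural$ commutes with $\star$. Let $V$ be an invertible $n\times n$ matrix function on $U$ of class $C^2$, set $M=V^\natural V$ and $A=M^{-1}dM$. Let $\varphi,\chi:U\to\mathbb{C}$ be $C^\infty$ functions, each of the form $\frac{-\sigma(\omega-v)\pm\sqrt{(\omega-v)^2+\sigma\rho^2}}{\rho}$ for some $\omega\in\mathbb{C}$ and a continuous branch of the square root, with $\varphi,\chi\ne0$ and $\varphi^2+\sigma,\chi^2+\sigma\neq0$ on $U$, and with $\chi=-\sigma/\varphi^\natural$. Let $X$ and $\widetilde X$ be invertible $n\times n$ matrix functions on $U$ of class $C^2$ (with $C^1$ inverses) solving $$\varphi\,(dX+AX)=\star dX,\qquad \chi\,(d\widetilde X+A\widetilde X)=\star d\widetilde X.$$ Then the matrix function $\mathcal{M}=\widetilde X^\natural\,M\,X$ satisfies $d\mathcal{M}=0$ on $U$.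
   Context: The Weyl upper half-plane is $\{(\rho,v)\in\mathbb{R}^2:\rho>0\}$. The Hodge star $\star$ acts on one-forms in $(\rho,v)$ (entrywise, linearly over functions) by $\star d\rho=-\sigma\,dv$, $\star dv=d\rho$. Examples of $\natural$: $N^\natural=N^T$, or $N^\natural=\eta N^\dagger\eta^{-1}$ for a constant invertible matrix $\eta$. *)

From Stdlib Require Import Reals ClassicalEpsilon.
Open Scope R_scope.

Record C := mkC { Re : R; Im : R }.
Definition RtoC (x : R) : C := mkC x 0.
Definition C0 : C := RtoC 0.
Definition C1 : C := RtoC 1.
Definition Cadd (z w : C) : C := mkC (Re z + Re w) (Im z + Im w).
Definition Copp (z : C) : C := mkC (- Re z) (- Im z).
Definition Csub (z w : C) : C := Cadd z (Copp w).
Definition Cmul (z w : C) : C :=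
  mkC (Re z * Re w - Im z * Im w) (Re z * Im w + Im z * Re w).
Definition Cinv (z : C) : C :=
  let d := Re z * Re z + Im z * Im z in mkC (Re z / d) (- Im z / d).
Definition Cdiv (z w : C) : C := Cmul z (Cinv w).
Definition Cconj (z : C) : C := mkC (Re z) (- Im z).

(* ---------- n x n matrices (entries indexed by i, j < n) ---------- *)
Definition Mat := nat -> nat -> C.
Fixpoint Csum (f : nat -> C) (k : nat) : C :=
  match k with O => C0 | S k => Cadd (Csum f k) (f k) end.
Definition mmul (n : nat) (A B : Mat) : Mat :=
  fun i j => Csum (fun k => Cmul (A i k) (B k j)) n.
Definition madd (A B : Mat) : Mat := fun i j => Cadd (A i j) (B i j).
Definition mscal (c : C) (A : Mat) : Mat := fun i j => Cmul c (A i j).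
Definition mid : Mat := fun i j => if Nat.eq_dec i j then C1 else C0.
Definition mzero : Mat := fun _ _ => C0.
Definition meq (n : nat) (A B : Mat) : Prop :=
  forall i j, (i < n)%nat -> (j < n)%nat -> A i j = B i j.
(* the inverse of a matrix (meaningful when it is invertible) *)
Definition minv (n : nat) (A : Mat) : Mat :=
  epsilon (inhabits mzero)
    (fun B => meq n (mmul n A B) mid /\ meq n (mmul n B A) mid).

Definition SFun := R -> R -> C.
Definition MFun := R -> R -> Mat.
Definition OneForm := (MFun * MFun)%type. (* A_rho d rho + A_v dv *)

Definition fmul (n : nat) (F G : MFun) : MFun := fun r v => mmul n (F r v) (G r v).
Definition fadd (F G : MFun) : MFun := fun r v => madd (F r v) (G r v).
Definition fscal (f : SFun) (F : MFun) : MFun := fun r v => mscal (f r v) (F r v).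
Definition fid : MFun := fun _ _ => mid.
Definition fzero : MFun := fun _ _ => mzero.

Definition mfeq (n : nat) (U : R -> R -> Prop) (F G : MFun) : Prop :=
  forall r v, U r v -> meq n (F r v) (G r v).
Definition ofeq (n : nat) (U : R -> R -> Prop) (a b : OneForm) : Prop :=
  mfeq n U (fst a) (fst b) /\ mfeq n U (snd a) (snd b).

Definition oadd (a b : OneForm) : OneForm := (fadd (fst a) (fst b), fadd (snd a) (snd b)).
Definition oscal (f : SFun) (a : OneForm) : OneForm := (fscal f (fst a), fscal f (snd a)).
Definition omulr (n : nat) (a : OneForm) (X : MFun) : OneForm :=
  (fmul n (fst a) X, fmul n (snd a) X).
(* Hodge star: star d rho = - sigma dv, star dv = d rho, so
   star (a d rho + b dv) = b d rho - sigma a dv *)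
Definition star (sigma : R) (a : OneForm) : OneForm :=
  (snd a, fscal (fun _ _ => RtoC (- sigma)) (fst a)).
Definition oapp (nat : MFun -> MFun) (a : OneForm) : OneForm :=
  (nat (fst a), nat (snd a)).

Definition sconj (cj : bool) (f : SFun) : SFun :=
  if cj then (fun r v => Cconj (f r v)) else f.

Definition open2 (U : R -> R -> Prop) : Prop :=
  forall r v, U r v -> exists d, 0 < d /\
    forall r' v', Rabs (r' - r) < d -> Rabs (v' - v) < d -> U r' v'.
Definition in_weyl_half_plane (U : R -> R -> Prop) : Prop :=
  forall r v, U r v -> 0 < r.

Definition has_pdr_R (g g' : R -> R -> R) (U : R -> R -> Prop) : Prop :=
  forall r v, U r v -> derivable_pt_lim (fun x => g x v) r (g' r v).
Definition has_pdv_R (g g' : R -> R -> R) (U : R -> R -> Prop) : Prop :=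
  forall r v, U r v -> derivable_pt_lim (fun y => g r y) v (g' r v).
Definition has_pdr_M (n : nat) (F F' : MFun) (U : R -> R -> Prop) : Prop :=
  forall i j, (i < n)%nat -> (j < n)%nat ->
    has_pdr_R (fun r v => Re (F r v i j)) (fun r v => Re (F' r v i j)) U /\
    has_pdr_R (fun r v => Im (F r v i j)) (fun r v => Im (F' r v i j)) U.
Definition has_pdv_M (n : nat) (F F' : MFun) (U : R -> R -> Prop) : Prop :=
  forall i j, (i < n)%nat -> (j < n)%nat ->
    has_pdv_R (fun r v => Re (F r v i j)) (fun r v => Re (F' r v i j)) U /\
    has_pdv_R (fun r v => Im (F r v i j)) (fun r v => Im (F' r v i j)) U.

Definition pdr_R (g : R -> R -> R) : R -> R -> R :=
  fun r v => epsilon (inhabits 0) (fun l => derivable_pt_lim (fun x => g x v) r l).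
Definition pdv_R (g : R -> R -> R) : R -> R -> R :=
  fun r v => epsilon (inhabits 0) (fun l => derivable_pt_lim (fun y => g r y) v l).
Definition pdr_C (f : SFun) : SFun :=
  fun r v => mkC (pdr_R (fun a b => Re (f a b)) r v) (pdr_R (fun a b => Im (f a b)) r v).
Definition pdv_C (f : SFun) : SFun :=
  fun r v => mkC (pdv_R (fun a b => Re (f a b)) r v) (pdv_R (fun a b => Im (f a b)) r v).
Definition pdr_M (F : MFun) : MFun := fun r v i j => pdr_C (fun a b => F a b i j) r v.
Definition pdv_M (F : MFun) : MFun := fun r v i j => pdv_C (fun a b => F a b i j) r v.
Definition dM (F : MFun) : OneForm := (pdr_M F, pdv_M F).

Definition cont_on (g : R -> R -> R) (U : R -> R -> Prop) : Prop :=
  forall r v, U r v -> forall eps, 0 < eps -> exists d, 0 < d /\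
    forall r' v', Rabs (r' - r) < d -> Rabs (v' - v) < d ->
      Rabs (g r' v' - g r v) < eps.
Fixpoint CkR (k : nat) (g : R -> R -> R) (U : R -> R -> Prop) : Prop :=
  match k with
  | O => cont_on g U
  | S k' => cont_on g U /\
      (forall r v, U r v ->
         (exists l, derivable_pt_lim (fun x => g x v) r l) /\
         (exists l, derivable_pt_lim (fun y => g r y) v l)) /\
      CkR k' (pdr_R g) U /\ CkR k' (pdv_R g) U
  end.
Definition CkC (k : nat) (f : SFun) (U : R -> R -> Prop) : Prop :=
  CkR k (fun r v => Re (f r v)) U /\ CkR k (fun r v => Im (f r v)) U.
Definition CkM (n k : nat) (F : MFun) (U : R -> R -> Prop) : Prop :=
  forall i j, (i < n)%nat -> (j < n)%nat -> CkC k (fun r v => F r v i j) U.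
Definition CinfC (f : SFun) (U : R -> R -> Prop) : Prop := forall k, CkC k f U.

Definition natural_op (n : nat) (U : R -> R -> Prop) (sigma : R) (cj : bool)
  (nat : MFun -> MFun) : Prop :=
  (* it is a map on matrix functions on U: depends only on values on U *)
  (forall N1 N2, mfeq n U N1 N2 -> mfeq n U (nat N1) (nat N2)) /\
  (forall N, mfeq n U (nat (nat N)) N) /\
  (forall N1 N2, mfeq n U (nat (fmul n N1 N2)) (fmul n (nat N2) (nat N1))) /\
  (forall N1 N2, mfeq n U (nat (fadd N1 N2)) (fadd (nat N1) (nat N2))) /\
  (forall (f : SFun) N, mfeq n U (nat (fscal f N)) (fscal (sconj cj f) (nat N))) /\
  (forall N N', has_pdr_M n N N' U -> has_pdr_M n (nat N) (nat N') U) /\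
  (forall N N', has_pdv_M n N N' U -> has_pdv_M n (nat N) (nat N') U) /\
  (forall a : OneForm, ofeq n U (oapp nat (star sigma a)) (star sigma (oapp nat a))).

Definition invertible_Ck (n k : nat) (X : MFun) (U : R -> R -> Prop) : Prop :=
  exists Xi : MFun, CkM n k Xi U /\ mfeq n U (fmul n X Xi) fid /\ mfeq n U (fmul n Xi X) fid.
Definition invertible_on (n : nat) (X : MFun) (U : R -> R -> Prop) : Prop :=
  exists Xi : MFun, mfeq n U (fmul n X Xi) fid /\ mfeq n U (fmul n Xi X) fid.

Definition root_form (U : R -> R -> Prop) (sigma : R) (phi : SFun) : Prop :=
  exists (omega : C) (e : R) (s : SFun),
    (e = 1 \/ e = -1) /\ CkC 0 s U /\
    (forall r v, U r v ->
       Cmul (s r v) (s r v) =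
       Cadd (Cmul (Csub omega (RtoC v)) (Csub omega (RtoC v))) (RtoC (sigma * (r * r)))) /\
    (forall r v, U r v ->
       phi r v = Cdiv (Cadd (Cmul (RtoC (- sigma)) (Csub omega (RtoC v)))
                            (Cmul (RtoC e) (s r v)))
                      (RtoC r)).

Definition Mof (n : nat) (nat : MFun -> MFun) (V : MFun) : MFun := fmul n (nat V) V.
Definition Aof (n : nat) (M : MFun) : OneForm :=
  (fun r v => mmul n (minv n (M r v)) (pdr_M M r v),
   fun r v => mmul n (minv n (M r v)) (pdv_M M r v)).

(* Since star (star a) = -sigma a, the operator phi - star has the inverse
   (phi + star) / (phi^2 + sigma), so the equation phi (dX + AX) = star dX can be
   solved for dX:  dX = - kappa(phi) (phi AX + star (AX)),  kappa(p) = p / (p^2 + sigma);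
   the same holds for Xt with chi.  From M^nat = M one gets A^nat M = (MA)^nat =
   (dM)^nat = dM = MA, so after applying nat every term of d(Xt^nat M X) is a scalar
   multiple of B = Xt^nat M A X or of star B.  For psi = chi^nat = -sigma/phi the
   scalars satisfy kappa(psi) = -kappa(phi) and psi kappa(psi) + phi kappa(phi) = 1,
   which are exactly the conditions for the coefficients of B and star B to vanish. *)

From Stdlib Require Import Reals Lra Lia ClassicalEpsilon FunctionalExtensionality
  Setoid Morphisms Field.
Open Scope R_scope.

(** * Complex numbers *)

Lemma C_ext (a b : C) : Re a = Re b -> Im a = Im b -> a = b.
Proof. destruct a, b; simpl; intros; subst; reflexivity. Qed.

Lemma C_ring : ring_theory C0 C1 Cadd Cmul Csub Copp (@eq C).
Proof.
  constructor; intros; apply C_ext;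
    repeat match goal with x : C |- _ => destruct x end; simpl; ring.
Qed.

Lemma C_field : field_theory C0 C1 Cadd Cmul Csub Copp Cdiv Cinv (@eq C).
Proof.
  constructor.
  - exact C_ring.
  - intro H. injection H. lra.
  - reflexivity.
  - intros [a b] Hnz.
    assert (Hd : a * a + b * b <> 0).
    { intro H0. apply Hnz. assert (a = 0) by nra. assert (b = 0) by nra. subst. reflexivity. }
    apply C_ext; simpl; field; auto.
Qed.
Add Field Cfield : C_field.

Lemma RtoC_opp x : RtoC (- x) = Copp (RtoC x).
Proof. apply C_ext; simpl; ring. Qed.

Definition cs (cj : bool) (z : C) : C := if cj then Cconj z else z.

Lemma sconj_cs cj (f : SFun) r v : sconj cj f r v = cs cj (f r v).
Proof. destruct cj; reflexivity. Qed.

Lemma cs_add cj a b : cs cj (Cadd a b) = Cadd (cs cj a) (cs cj b).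
Proof. destruct cj; simpl; auto. apply C_ext; simpl; ring. Qed.

Lemma cs_mul cj a b : cs cj (Cmul a b) = Cmul (cs cj a) (cs cj b).
Proof. destruct cj; simpl; auto. apply C_ext; simpl; ring. Qed.

Lemma cs_opp cj a : cs cj (Copp a) = Copp (cs cj a).
Proof. destruct cj; reflexivity. Qed.

Lemma cs_inv cj a : cs cj (Cinv a) = Cinv (cs cj a).
Proof.
  destruct cj; simpl; auto. destruct a as [x y]. unfold Cinv, Cconj; simpl.
  replace (- y * - y) with (y * y) by ring. apply C_ext; simpl; auto. unfold Rdiv; ring.
Qed.

Lemma cs_div cj a b : cs cj (Cdiv a b) = Cdiv (cs cj a) (cs cj b).
Proof. unfold Cdiv. rewrite cs_mul, cs_inv. reflexivity. Qed.

Lemma cs_RtoC cj x : cs cj (RtoC x) = RtoC x.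
Proof. destruct cj; simpl; auto. apply C_ext; simpl; ring. Qed.

Lemma cs_invol cj a : cs cj (cs cj a) = a.
Proof. destruct cj; simpl; auto. apply C_ext; simpl; ring. Qed.

(** * Matrices *)

Lemma Csum_ext f g m : (forall k, (k < m)%nat -> f k = g k) -> Csum f m = Csum g m.
Proof. induction m; simpl; intros H; auto. rewrite IHm, H by auto. reflexivity. Qed.

Lemma Csum_add f g m : Csum (fun k => Cadd (f k) (g k)) m = Cadd (Csum f m) (Csum g m).
Proof. induction m; simpl. apply C_ext; simpl; ring. rewrite IHm. ring. Qed.

Lemma Csum_mull c f m : Csum (fun k => Cmul c (f k)) m = Cmul c (Csum f m).
Proof. induction m; simpl. apply C_ext; simpl; ring. rewrite IHm. ring. Qed.

Lemma Csum_mulr c f m : Csum (fun k => Cmul (f k) c) m = Cmul (Csum f m) c.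
Proof. induction m; simpl. apply C_ext; simpl; ring. rewrite IHm. ring. Qed.

Lemma Csum_comm (f : nat -> nat -> C) m1 m2 :
  Csum (fun k => Csum (fun l => f k l) m2) m1 = Csum (fun l => Csum (fun k => f k l) m1) m2.
Proof.
  induction m1; simpl.
  - induction m2; simpl; auto. rewrite <- IHm2. apply C_ext; simpl; ring.
  - rewrite IHm1, <- Csum_add. reflexivity.
Qed.

Lemma Csum_C0 m : Csum (fun _ => C0) m = C0.
Proof. induction m; simpl; auto. rewrite IHm. ring. Qed.

Lemma Csum_pick (f : nat -> C) (d : nat -> bool) i m : (i < m)%nat ->
  (forall k, d k = true <-> k = i) ->
  Csum (fun k => if d k then f k else C0) m = f i.
Proof.
  intros Hi Hd. induction m; [lia|]. simpl.
  destruct (Nat.eq_dec i m) as [->|Hne].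
  - rewrite (Csum_ext _ (fun _ => C0)), Csum_C0.
    + replace (d m) with true by (symmetry; apply Hd; reflexivity). ring.
    + intros k Hk. destruct (d k) eqn:E; auto. apply Hd in E. lia.
  - rewrite IHm by lia. destruct (d m) eqn:E; [apply Hd in E; lia | ring].
Qed.

Lemma mmul_assoc n A B D : mmul n (mmul n A B) D = mmul n A (mmul n B D).
Proof.
  apply functional_extensionality; intro i; apply functional_extensionality; intro j.
  unfold mmul.
  transitivity (Csum (fun k => Csum (fun l => Cmul (A i l) (Cmul (B l k) (D k j))) n) n).
  - apply Csum_ext; intros k _. rewrite <- Csum_mulr. apply Csum_ext; intros; ring.
  - rewrite Csum_comm. apply Csum_ext; intros. rewrite Csum_mull. reflexivity.
Qed.

Lemma mmul_addl n A B D : mmul n (madd A B) D = madd (mmul n A D) (mmul n B D).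
Proof.
  apply functional_extensionality; intro i; apply functional_extensionality; intro j.
  unfold mmul, madd. rewrite <- Csum_add. apply Csum_ext; intros; ring.
Qed.

Lemma mmul_addr n A B D : mmul n D (madd A B) = madd (mmul n D A) (mmul n D B).
Proof.
  apply functional_extensionality; intro i; apply functional_extensionality; intro j.
  unfold mmul, madd. rewrite <- Csum_add. apply Csum_ext; intros; ring.
Qed.

Lemma mmul_scall n c A B : mmul n (mscal c A) B = mscal c (mmul n A B).
Proof.
  apply functional_extensionality; intro i; apply functional_extensionality; intro j.
  unfold mmul, mscal. rewrite <- Csum_mull. apply Csum_ext; intros; ring.
Qed.

Lemma mmul_scalr n c A B : mmul n A (mscal c B) = mscal c (mmul n A B).
Proof.
  apply functional_extensionality; intro i; apply functional_extensionality; intro j.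
  unfold mmul, mscal. rewrite <- Csum_mull. apply Csum_ext; intros; ring.
Qed.

Lemma mmul_idl n A : meq n (mmul n mid A) A.
Proof.
  intros i j Hi Hj. unfold mmul, mid.
  rewrite <- (Csum_pick (fun k => A k j) (fun k => Nat.eqb i k) i n Hi).
  - apply Csum_ext; intros k _. destruct (Nat.eq_dec i k), (Nat.eqb_spec i k); try lia; ring.
  - intro k. rewrite Nat.eqb_eq. lia.
Qed.

#[export] Instance meq_equiv n : Equivalence (meq n).
Proof.
  constructor.
  - intros A i j _ _; reflexivity.
  - intros A B H i j Hi Hj; symmetry; auto.
  - intros A B D H1 H2 i j Hi Hj; rewrite H1, H2; auto.
Qed.

#[export] Instance madd_proper n : Proper (meq n ==> meq n ==> meq n) madd.
Proof. intros A A' H B B' H' i j Hi Hj; unfold madd; rewrite H, H'; auto. Qed.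

#[export] Instance mscal_proper n c : Proper (meq n ==> meq n) (mscal c).
Proof. intros A A' H i j Hi Hj; unfold mscal; rewrite H; auto. Qed.

#[export] Instance mmul_proper n : Proper (meq n ==> meq n ==> meq n) (mmul n).
Proof.
  intros A A' H B B' H' i j Hi Hj; unfold mmul. apply Csum_ext; intros k Hk.
  rewrite H, H'; auto.
Qed.

#[export] Instance mfeq_equiv n U : Equivalence (mfeq n U).
Proof.
  constructor.
  - intros A r v _; reflexivity.
  - intros A B H r v Hu; symmetry; auto.
  - intros A B D H1 H2 r v Hu; rewrite (H1 r v Hu), (H2 r v Hu); reflexivity.
Qed.

#[export] Instance fmul_proper n U : Proper (mfeq n U ==> mfeq n U ==> mfeq n U) (fmul n).
Proof. intros A A' H B B' H' r v Hu; unfold fmul; rewrite (H r v Hu), (H' r v Hu); reflexivity. Qed.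

Lemma minv_r n A B : meq n (mmul n A B) mid -> meq n (mmul n B A) mid ->
  meq n (mmul n A (minv n A)) mid.
Proof.
  intros H1 H2. unfold minv.
  apply (epsilon_spec (inhabits mzero)
    (fun B => meq n (mmul n A B) mid /\ meq n (mmul n B A) mid)).
  eauto.
Qed.

Lemma Aof_spec n M U : invertible_on n M U ->
  mfeq n U (fmul n M (fst (Aof n M))) (pdr_M M) /\
  mfeq n U (fmul n M (snd (Aof n M))) (pdv_M M).
Proof.
  intros [Mi [H1 H2]].
  split; intros r v Hu; unfold fmul, Aof; cbn [fst snd];
    rewrite <- mmul_assoc, (minv_r n _ (Mi r v) (H1 r v Hu) (H2 r v Hu)); apply mmul_idl.
Qed.

Lemma product_rule_terms_cancel n T M X Ar Av nAr nAv M1 X1 d1 d2 k1 k2 c1 c2 :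
  meq n (mmul n nAr M) (mmul n M Ar) -> meq n (mmul n nAv M) (mmul n M Av) ->
  meq n M1 (madd (mscal k1 (mmul n M Ar)) (mscal k2 (mmul n M Av))) ->
  meq n X1 (madd (mscal c1 (mmul n Ar X)) (mscal c2 (mmul n Av X))) ->
  Cadd (Cadd d1 k1) c1 = C0 -> Cadd (Cadd d2 k2) c2 = C0 ->
  meq n (madd (mmul n (madd (mmul n (madd (mscal d1 (mmul n T nAr))
                                             (mscal d2 (mmul n T nAv))) M)
                             (mmul n T M1)) X)
              (mmul n (mmul n T M) X1)) mzero.
Proof.
  intros Hr Hv HM1 HX1 E1 E2.
  assert (HT : meq n (mmul n (madd (mscal d1 (mmul n T nAr)) (mscal d2 (mmul n T nAv))) M)
                     (madd (mscal d1 (mmul n T (mmul n M Ar))) (mscal d2 (mmul n T (mmul n M Av))))).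
  { rewrite mmul_addl, !mmul_scall, !mmul_assoc, Hr, Hv. reflexivity. }
  rewrite HT, HM1, HX1.
  repeat rewrite ?mmul_addl, ?mmul_addr, ?mmul_scall, ?mmul_scalr, ?mmul_assoc.
  intros i j Hi Hj. unfold madd, mscal, mzero.
  set (P := mmul n T (mmul n M (mmul n Ar X)) i j).
  set (Q := mmul n T (mmul n M (mmul n Av X)) i j).
  transitivity (Cadd (Cmul (Cadd (Cadd d1 k1) c1) P) (Cmul (Cadd (Cadd d2 k2) c2) Q)).
  - ring.
  - rewrite E1, E2. apply C_ext; simpl; ring.
Qed.

(** * Partial derivatives *)

Definition derivable_pt_lim_C (f : R -> C) (x : R) (l : C) : Prop :=
  derivable_pt_lim (fun t => Re (f t)) x (Re l) /\
  derivable_pt_lim (fun t => Im (f t)) x (Im l).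

Lemma derivable_pt_lim_C_plus f g x l1 l2 :
  derivable_pt_lim_C f x l1 -> derivable_pt_lim_C g x l2 ->
  derivable_pt_lim_C (fun t => Cadd (f t) (g t)) x (Cadd l1 l2).
Proof. intros [H1 H2] [H3 H4]; split; simpl; apply derivable_pt_lim_plus; auto. Qed.

Lemma derivable_pt_lim_C_mult f g x l1 l2 :
  derivable_pt_lim_C f x l1 -> derivable_pt_lim_C g x l2 ->
  derivable_pt_lim_C (fun t => Cmul (f t) (g t)) x (Cadd (Cmul l1 (g x)) (Cmul (f x) l2)).
Proof.
  intros [H1 H2] [H3 H4]; split; simpl.
  - replace (Re l1 * Re (g x) - Im l1 * Im (g x) + (Re (f x) * Re l2 - Im (f x) * Im l2))
      with (Re l1 * Re (g x) + Re (f x) * Re l2 - (Im l1 * Im (g x) + Im (f x) * Im l2))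
      by ring.
    apply derivable_pt_lim_minus; apply derivable_pt_lim_mult; auto.
  - replace (Re l1 * Im (g x) + Im l1 * Re (g x) + (Re (f x) * Im l2 + Im (f x) * Re l2))
      with (Re l1 * Im (g x) + Re (f x) * Im l2 + (Im l1 * Re (g x) + Im (f x) * Re l2))
      by ring.
    apply derivable_pt_lim_plus; apply derivable_pt_lim_mult; auto.
Qed.

Lemma derivable_pt_lim_C_sum_mult (f g : R -> nat -> C) f' g' x m :
  (forall k, (k < m)%nat -> derivable_pt_lim_C (fun t => f t k) x (f' k)) ->
  (forall k, (k < m)%nat -> derivable_pt_lim_C (fun t => g t k) x (g' k)) ->
  derivable_pt_lim_C (fun t => Csum (fun k => Cmul (f t k) (g t k)) m) x
    (Csum (fun k => Cadd (Cmul (f' k) (g x k)) (Cmul (f x k) (g' k))) m).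
Proof.
  intros Hf Hg. induction m; simpl.
  - split; apply derivable_pt_lim_const.
  - apply derivable_pt_lim_C_plus.
    + apply IHm; intros; [apply Hf | apply Hg]; lia.
    + apply derivable_pt_lim_C_mult; [apply Hf | apply Hg]; lia.
Qed.

Lemma derivable_pt_lim_locally (p q : R -> R) x l d : 0 < d ->
  (forall t, Rabs (t - x) < d -> p t = q t) ->
  derivable_pt_lim p x l -> derivable_pt_lim q x l.
Proof.
  intros Hd Hpq Hp eps Heps. destruct (Hp eps Heps) as [del Hdel].
  assert (Hm : 0 < Rmin del d) by (apply Rmin_pos; [apply cond_pos | auto]).
  exists (mkposreal _ Hm). intros h Hh0 Hh. simpl in Hh.
  rewrite <- !Hpq.
  - apply Hdel; auto. eapply Rlt_le_trans; [exact Hh | apply Rmin_l].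
  - rewrite Rminus_diag, Rabs_R0; auto.
  - replace (x + h - x) with h by ring. eapply Rlt_le_trans; [exact Hh | apply Rmin_r].
Qed.

Lemma derivable_pt_lim_C_locally f g x l d : 0 < d ->
  (forall t, Rabs (t - x) < d -> f t = g t) ->
  derivable_pt_lim_C f x l -> derivable_pt_lim_C g x l.
Proof.
  intros Hd Hfg [H1 H2].
  split; eapply derivable_pt_lim_locally; eauto; intros t Ht; simpl; rewrite Hfg; auto.
Qed.

Lemma derivable_pt_lim_C_unique f x l1 l2 :
  derivable_pt_lim_C f x l1 -> derivable_pt_lim_C f x l2 -> l1 = l2.
Proof. intros [H1 H2] [H3 H4]. apply C_ext; eapply uniqueness_limite; eauto. Qed.

Lemma has_pdr_M_iff n F F' U : has_pdr_M n F F' U <->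
  (forall i j r v, (i < n)%nat -> (j < n)%nat -> U r v ->
     derivable_pt_lim_C (fun x => F x v i j) r (F' r v i j)).
Proof.
  unfold has_pdr_M, has_pdr_R, derivable_pt_lim_C; split.
  - intros H i j r v Hi Hj Hu. destruct (H i j Hi Hj); auto.
  - intros H i j Hi Hj. split; intros r v Hu; apply (H i j r v Hi Hj Hu).
Qed.

Lemma has_pdv_M_iff n F F' U : has_pdv_M n F F' U <->
  (forall i j r v, (i < n)%nat -> (j < n)%nat -> U r v ->
     derivable_pt_lim_C (fun y => F r y i j) v (F' r v i j)).
Proof.
  unfold has_pdv_M, has_pdv_R, derivable_pt_lim_C; split.
  - intros H i j r v Hi Hj Hu. destruct (H i j Hi Hj); auto.
  - intros H i j Hi Hj. split; intros r v Hu; apply (H i j r v Hi Hj Hu).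
Qed.

Lemma has_pdr_M_mul n U F F' G G' : has_pdr_M n F F' U -> has_pdr_M n G G' U ->
  has_pdr_M n (fmul n F G) (fadd (fmul n F' G) (fmul n F G')) U.
Proof.
  rewrite !has_pdr_M_iff. intros HF HG i j r v Hi Hj Hu.
  unfold fmul, fadd, mmul, madd. rewrite <- Csum_add.
  apply (derivable_pt_lim_C_sum_mult (fun t k => F t v i k) (fun t k => G t v k j));
    intros; [apply HF | apply HG]; auto.
Qed.

Lemma has_pdv_M_mul n U F F' G G' : has_pdv_M n F F' U -> has_pdv_M n G G' U ->
  has_pdv_M n (fmul n F G) (fadd (fmul n F' G) (fmul n F G')) U.
Proof.
  rewrite !has_pdv_M_iff. intros HF HG i j r v Hi Hj Hu.
  unfold fmul, fadd, mmul, madd. rewrite <- Csum_add.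
  apply (derivable_pt_lim_C_sum_mult (fun t k => F r t i k) (fun t k => G r t k j));
    intros; [apply HF | apply HG]; auto.
Qed.

Lemma has_pdr_M_local n U F G F' : open2 U -> mfeq n U F G ->
  has_pdr_M n F F' U -> has_pdr_M n G F' U.
Proof.
  rewrite !has_pdr_M_iff. intros HU Heq H i j r v Hi Hj Hu.
  destruct (HU r v Hu) as [d [Hd Hb]].
  apply (derivable_pt_lim_C_locally (fun x => F x v i j) _ _ _ d Hd); auto.
  intros t Ht. apply Heq; auto. apply Hb; auto. rewrite Rminus_diag, Rabs_R0; auto.
Qed.

Lemma has_pdv_M_local n U F G F' : open2 U -> mfeq n U F G ->
  has_pdv_M n F F' U -> has_pdv_M n G F' U.
Proof.
  rewrite !has_pdv_M_iff. intros HU Heq H i j r v Hi Hj Hu.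
  destruct (HU r v Hu) as [d [Hd Hb]].
  apply (derivable_pt_lim_C_locally (fun y => F r y i j) _ _ _ d Hd); auto.
  intros t Ht. apply Heq; auto. apply Hb; auto. rewrite Rminus_diag, Rabs_R0; auto.
Qed.

Lemma has_pdr_M_unique n U F F1 F2 :
  has_pdr_M n F F1 U -> has_pdr_M n F F2 U -> mfeq n U F1 F2.
Proof.
  rewrite !has_pdr_M_iff. intros H1 H2 r v Hu i j Hi Hj.
  eapply derivable_pt_lim_C_unique; eauto.
Qed.

Lemma has_pdv_M_unique n U F F1 F2 :
  has_pdv_M n F F1 U -> has_pdv_M n F F2 U -> mfeq n U F1 F2.
Proof.
  rewrite !has_pdv_M_iff. intros H1 H2 r v Hu i j Hi Hj.
  eapply derivable_pt_lim_C_unique; eauto.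
Qed.

Lemma has_pdr_M_ext n U F F1 F2 : has_pdr_M n F F1 U -> mfeq n U F1 F2 -> has_pdr_M n F F2 U.
Proof.
  rewrite !has_pdr_M_iff. intros H1 H2 i j r v Hi Hj Hu. rewrite <- (H2 r v Hu i j Hi Hj); auto.
Qed.

Lemma has_pdv_M_ext n U F F1 F2 : has_pdv_M n F F1 U -> mfeq n U F1 F2 -> has_pdv_M n F F2 U.
Proof.
  rewrite !has_pdv_M_iff. intros H1 H2 i j r v Hi Hj Hu. rewrite <- (H2 r v Hu i j Hi Hj); auto.
Qed.

Lemma has_pdr_M_pdr_M n U F F' : has_pdr_M n F F' U -> has_pdr_M n F (pdr_M F) U.
Proof.
  intros H i j Hi Hj. destruct (H i j Hi Hj) as [A B].
  split; intros r v Hu; simpl; unfold pdr_R; apply epsilon_spec; eauto.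
Qed.

Lemma has_pdv_M_pdv_M n U F F' : has_pdv_M n F F' U -> has_pdv_M n F (pdv_M F) U.
Proof.
  intros H i j Hi Hj. destruct (H i j Hi Hj) as [A B].
  split; intros r v Hu; simpl; unfold pdv_R; apply epsilon_spec; eauto.
Qed.

Lemma CkM_has_pd n k F U : CkM n (S k) F U ->
  has_pdr_M n F (pdr_M F) U /\ has_pdv_M n F (pdv_M F) U.
Proof.
  intros H. split; intros i j Hi Hj; destruct (H i j Hi Hj) as [[_ [A _]] [_ [B _]]];
    split; intros r v Hu; simpl; unfold pdr_R, pdv_R; apply epsilon_spec;
    first [apply (A r v Hu) | apply (B r v Hu)].
Qed.

(** * The involution *)

Section Natural.

Context {n : nat} {U : R -> R -> Prop} {sigma : R} {cj : bool} {nu : MFun -> MFun}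
  (Hnat : natural_op n U sigma cj nu).

Let nu_congr : forall N1 N2, mfeq n U N1 N2 -> mfeq n U (nu N1) (nu N2) := proj1 Hnat.
Let nu_invol : forall N, mfeq n U (nu (nu N)) N := proj1 (proj2 Hnat).
Let nu_mul : forall N1 N2, mfeq n U (nu (fmul n N1 N2)) (fmul n (nu N2) (nu N1))
  := proj1 (proj2 (proj2 Hnat)).
Let nu_add : forall N1 N2, mfeq n U (nu (fadd N1 N2)) (fadd (nu N1) (nu N2))
  := proj1 (proj2 (proj2 (proj2 Hnat))).
Let nu_scal : forall f N, mfeq n U (nu (fscal f N)) (fscal (sconj cj f) (nu N))
  := proj1 (proj2 (proj2 (proj2 (proj2 Hnat)))).
Let nu_pdr : forall N N', has_pdr_M n N N' U -> has_pdr_M n (nu N) (nu N') U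
  := proj1 (proj2 (proj2 (proj2 (proj2 (proj2 Hnat))))).
Let nu_pdv : forall N N', has_pdv_M n N N' U -> has_pdv_M n (nu N) (nu N') U
  := proj1 (proj2 (proj2 (proj2 (proj2 (proj2 (proj2 Hnat)))))).

Lemma nu_fid : mfeq n U (nu fid) fid.
Proof.
  symmetry. transitivity (nu (nu fid)); [symmetry; apply nu_invol|].
  transitivity (nu (fmul n fid (nu fid))).
  { apply nu_congr. intros r v _. symmetry. apply mmul_idl. }
  rewrite nu_mul, (nu_invol fid). intros r v _. apply mmul_idl.
Qed.

Lemma nu_Mof V : mfeq n U (nu (Mof n nu V)) (Mof n nu V).
Proof. unfold Mof. rewrite nu_mul, (nu_invol V). reflexivity. Qed.

Lemma Mof_invertible V : invertible_on n V U -> invertible_on n (Mof n nu V) U.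
Proof.
  intros [Vi [H1 H2]].
  assert (N1 : mfeq n U (fmul n (nu V) (nu Vi)) fid).
  { rewrite <- nu_mul, (nu_congr _ _ H2). exact nu_fid. }
  assert (N2 : mfeq n U (fmul n (nu Vi) (nu V)) fid).
  { rewrite <- nu_mul, (nu_congr _ _ H1). exact nu_fid. }
  exists (fmul n Vi (nu Vi)). unfold Mof, fmul, fid in *.
  split; intros r v Hu.
  - rewrite mmul_assoc, <- (mmul_assoc n (V r v)), (H1 r v Hu), mmul_idl. exact (N1 r v Hu).
  - rewrite mmul_assoc, <- (mmul_assoc n (nu Vi r v)), (N2 r v Hu), mmul_idl. exact (H2 r v Hu).
Qed.

Lemma Mof_has_pd k V : CkM n (S k) V U ->
  has_pdr_M n (Mof n nu V) (pdr_M (Mof n nu V)) U /\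
  has_pdv_M n (Mof n nu V) (pdv_M (Mof n nu V)) U.
Proof.
  intros HV. destruct (CkM_has_pd n k V U HV) as [Hr Hv]. split.
  - eapply has_pdr_M_pdr_M, has_pdr_M_mul; [apply nu_pdr|]; exact Hr.
  - eapply has_pdv_M_pdv_M, has_pdv_M_mul; [apply nu_pdv|]; exact Hv.
Qed.

Lemma nu_pdr_M_fixed F : open2 U -> mfeq n U (nu F) F ->
  has_pdr_M n F (pdr_M F) U -> mfeq n U (nu (pdr_M F)) (pdr_M F).
Proof.
  intros HU HF Hd. eapply has_pdr_M_unique; [|exact Hd].
  eapply has_pdr_M_local; [exact HU | exact HF | apply nu_pdr; exact Hd].
Qed.

Lemma nu_pdv_M_fixed F : open2 U -> mfeq n U (nu F) F ->
  has_pdv_M n F (pdv_M F) U -> mfeq n U (nu (pdv_M F)) (pdv_M F).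
Proof.
  intros HU HF Hd. eapply has_pdv_M_unique; [|exact Hd].
  eapply has_pdv_M_local; [exact HU | exact HF | apply nu_pdv; exact Hd].
Qed.

(* [nu D M = nu D nu M = nu (M D) = M D] *)
Lemma nu_mul_fixed M D : mfeq n U (nu M) M ->
  mfeq n U (nu (fmul n M D)) (fmul n M D) -> mfeq n U (fmul n (nu D) M) (fmul n M D).
Proof. intros HM HMD. rewrite <- HM at 1. rewrite <- nu_mul. exact HMD. Qed.

Lemma Aof_natural k V : open2 U -> CkM n (S k) V U -> invertible_on n V U ->
  let M := Mof n nu V in
  mfeq n U (fmul n (nu (fst (Aof n M))) M) (fmul n M (fst (Aof n M))) /\
  mfeq n U (fmul n (nu (snd (Aof n M))) M) (fmul n M (snd (Aof n M))).
Proof.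
  intros HU HV HVi M.
  destruct (Mof_has_pd k V HV) as [Hr Hv].
  destruct (Aof_spec n M U (Mof_invertible V HVi)) as [Ar Av].
  split; apply nu_mul_fixed; try apply nu_Mof.
  - rewrite (nu_congr _ _ Ar), Ar. exact (nu_pdr_M_fixed M HU (nu_Mof V) Hr).
  - rewrite (nu_congr _ _ Av), Av. exact (nu_pdv_M_fixed M HU (nu_Mof V) Hv).
Qed.

Lemma nu_fadd_fscal_fmul f1 f2 F P Q :
  mfeq n U (nu (fadd (fscal f1 (fmul n P F)) (fscal f2 (fmul n Q F))))
           (fadd (fscal (sconj cj f1) (fmul n (nu F) (nu P)))
                 (fscal (sconj cj f2) (fmul n (nu F) (nu Q)))).
Proof.
  rewrite nu_add. intros r v Hu. unfold fadd.
  rewrite (nu_scal f1 _ r v Hu), (nu_scal f2 _ r v Hu). unfold fscal.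
  rewrite (nu_mul P F r v Hu), (nu_mul Q F r v Hu). reflexivity.
Qed.

Lemma nu_has_pdr_lincomb F P Q f1 f2 :
  has_pdr_M n F (pdr_M F) U ->
  mfeq n U (pdr_M F) (fadd (fscal f1 (fmul n P F)) (fscal f2 (fmul n Q F))) ->
  has_pdr_M n (nu F) (fadd (fscal (sconj cj f1) (fmul n (nu F) (nu P)))
                           (fscal (sconj cj f2) (fmul n (nu F) (nu Q)))) U.
Proof.
  intros HF HF'. eapply has_pdr_M_ext; [apply nu_pdr; exact HF|].
  rewrite (nu_congr _ _ HF'). apply nu_fadd_fscal_fmul.
Qed.

Lemma nu_has_pdv_lincomb F P Q f1 f2 :
  has_pdv_M n F (pdv_M F) U ->
  mfeq n U (pdv_M F) (fadd (fscal f1 (fmul n P F)) (fscal f2 (fmul n Q F))) ->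
  has_pdv_M n (nu F) (fadd (fscal (sconj cj f1) (fmul n (nu F) (nu P)))
                           (fscal (sconj cj f2) (fmul n (nu F) (nu Q)))) U.
Proof.
  intros HF HF'. eapply has_pdv_M_ext; [apply nu_pdv; exact HF|].
  rewrite (nu_congr _ _ HF'). apply nu_fadd_fscal_fmul.
Qed.

End Natural.

(** * Solving the equation *)

Definition kappa (s p : C) : C := Cdiv p (Cadd (Cmul p p) s).

Lemma cs_kappa cj x p : cs cj (kappa (RtoC x) p) = kappa (RtoC x) (cs cj p).
Proof. unfold kappa. rewrite cs_div, cs_add, cs_mul, cs_RtoC. reflexivity. Qed.

(* [p (x1 + a) = xv] and [p (xv + b) = -s x1] are the two components of
   [p (dX + AX) = star dX]; [(p - star)(p + star) = p^2 + s] inverts them. *)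
Lemma star_equation_solved_pointwise (s p x1 xv a b : C) : Cadd (Cmul p p) s <> C0 ->
  Cmul p (Cadd x1 a) = xv -> Cmul p (Cadd xv b) = Cmul (Copp s) x1 ->
  x1 = Cadd (Cmul (Copp (Cmul (kappa s p) p)) a) (Cmul (Copp (kappa s p)) b) /\
  xv = Cadd (Cmul (Cmul s (kappa s p)) a) (Cmul (Copp (Cmul (kappa s p) p)) b).
Proof.
  intros Hd H1 H2. subst xv.
  assert (Hx : Cmul x1 (Cadd (Cmul p p) s) = Copp (Cadd (Cmul (Cmul p p) a) (Cmul p b))).
  { transitivity (Csub (Cmul x1 (Cadd (Cmul p p) s))
                       (Csub (Cmul p (Cadd (Cmul p (Cadd x1 a)) b)) (Cmul (Copp s) x1))).
    - rewrite H2. ring.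
    - ring. }
  assert (Ex : x1 = Cdiv (Copp (Cadd (Cmul (Cmul p p) a) (Cmul p b))) (Cadd (Cmul p p) s)).
  { rewrite <- Hx. field. auto. }
  unfold kappa. rewrite Ex. split; field; auto.
Qed.

Lemma star_equation_solved n U sigma (p : SFun) (A : OneForm) (X : MFun) :
  (forall r v, U r v -> Cadd (Cmul (p r v) (p r v)) (RtoC sigma) <> C0) ->
  ofeq n U (oscal p (oadd (dM X) (omulr n A X))) (star sigma (dM X)) ->
  mfeq n U (pdr_M X)
    (fadd (fscal (fun r v => Copp (Cmul (kappa (RtoC sigma) (p r v)) (p r v))) (fmul n (fst A) X))
          (fscal (fun r v => Copp (kappa (RtoC sigma) (p r v))) (fmul n (snd A) X))) /\
  mfeq n U (pdv_M X)
    (fadd (fscal (fun r v => Cmul (RtoC sigma) (kappa (RtoC sigma) (p r v))) (fmul n (fst A) X))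
          (fscal (fun r v => Copp (Cmul (kappa (RtoC sigma) (p r v)) (p r v))) (fmul n (snd A) X))).
Proof.
  intros Hd [E1 E2].
  assert (G : forall r v, U r v -> forall i j, (i < n)%nat -> (j < n)%nat ->
     let k := kappa (RtoC sigma) (p r v) in
     pdr_M X r v i j = Cadd (Cmul (Copp (Cmul k (p r v))) (fmul n (fst A) X r v i j))
                            (Cmul (Copp k) (fmul n (snd A) X r v i j)) /\
     pdv_M X r v i j = Cadd (Cmul (Cmul (RtoC sigma) k) (fmul n (fst A) X r v i j))
                            (Cmul (Copp (Cmul k (p r v))) (fmul n (snd A) X r v i j))).
  { intros r v Hu i j Hi Hj.
    pose proof (E1 r v Hu i j Hi Hj) as h1. pose proof (E2 r v Hu i j Hi Hj) as h2.
    cbn [oscal oadd omulr star dM fst snd] in h1, h2.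
    unfold fscal, fadd, mscal, madd in h1, h2. rewrite RtoC_opp in h2.
    apply star_equation_solved_pointwise; auto. }
  split; intros r v Hu i j Hi Hj; destruct (G r v Hu i j Hi Hj) as [g1 g2];
    unfold fadd, fscal, madd, mscal; auto.
Qed.

(* Since sigma^2 = 1, q^2 + sigma = sigma (p^2 + sigma) / p^2. *)
Lemma kappa_dual (sigma : R) (p : C) : (sigma = 1 \/ sigma = -1) -> p <> C0 ->
  Cadd (Cmul p p) (RtoC sigma) <> C0 ->
  let q := Cdiv (Copp (RtoC sigma)) p in
  kappa (RtoC sigma) q = Copp (kappa (RtoC sigma) p) /\
  Cadd (Cmul (kappa (RtoC sigma) q) q) (Cmul (kappa (RtoC sigma) p) p) = C1.
Proof.
  intros Hs Hp Hd q. subst q. unfold kappa.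
  destruct Hs as [-> | ->].
  - change (RtoC 1) with C1 in *. split; field; auto.
  - replace (RtoC (-1)) with (Copp C1) in * by (apply C_ext; simpl; ring).
    split; field; repeat split; auto;
      intro E; apply Hd; pose proof (f_equal Re E); pose proof (f_equal Im E);
      apply C_ext; simpl in *; lra.
Qed.

Lemma kappa_coefficients_cancel (sigma : R) cj (p q : C) : (sigma = 1 \/ sigma = -1) ->
  p <> C0 -> Cadd (Cmul p p) (RtoC sigma) <> C0 ->
  q = Cdiv (RtoC (- sigma)) (cs cj p) ->
  let s := RtoC sigma in
  Cadd (Cadd (cs cj (Copp (Cmul (kappa s q) q))) C1) (Copp (Cmul (kappa s p) p)) = C0 /\
  Cadd (Cadd (cs cj (Copp (kappa s q))) C0) (Copp (kappa s p)) = C0 /\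
  Cadd (Cadd (cs cj (Cmul s (kappa s q))) C0) (Cmul s (kappa s p)) = C0.
Proof.
  intros Hs Hp Hd Hq s. subst s.
  assert (Hcq : cs cj q = Cdiv (Copp (RtoC sigma)) p).
  { rewrite Hq, cs_div, cs_invol, cs_RtoC, RtoC_opp. reflexivity. }
  destruct (kappa_dual sigma p Hs Hp Hd) as [K1 K2].
  rewrite ?cs_opp, ?cs_mul, !cs_kappa, ?cs_RtoC, Hcq.
  repeat split.
  - rewrite <- K2. ring.
  - rewrite K1. ring.
  - rewrite K1. ring.
Qed.

Theorem mainTheorem8 (n : nat) (sigma : R) (U : R -> R -> Prop)
  (cj : bool) (nat : MFun -> MFun) (V : MFun) (phi chi : SFun) (X Xt : MFun) :
  (sigma = 1 \/ sigma = -1) ->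
  open2 U -> in_weyl_half_plane U ->
  natural_op n U sigma cj nat ->
  CkM n 2 V U -> invertible_on n V U ->
  CinfC phi U -> CinfC chi U ->
  root_form U sigma phi -> root_form U sigma chi ->
  (forall r v, U r v -> phi r v <> C0) ->
  (forall r v, U r v -> chi r v <> C0) ->
  (forall r v, U r v -> Cadd (Cmul (phi r v) (phi r v)) (RtoC sigma) <> C0) ->
  (forall r v, U r v -> Cadd (Cmul (chi r v) (chi r v)) (RtoC sigma) <> C0) ->
  (forall r v, U r v -> chi r v = Cdiv (RtoC (- sigma)) (sconj cj phi r v)) ->
  CkM n 2 X U -> invertible_Ck n 1 X U ->
  CkM n 2 Xt U -> invertible_Ck n 1 Xt U ->
  ofeq n U (oscal phi (oadd (dM X) (omulr n (Aof n (Mof n nat V)) X))) (star sigma (dM X)) ->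
  ofeq n U (oscal chi (oadd (dM Xt) (omulr n (Aof n (Mof n nat V)) Xt))) (star sigma (dM Xt)) ->
  let Mcal := fmul n (fmul n (nat Xt) (Mof n nat V)) X in
  has_pdr_M n Mcal fzero U /\ has_pdv_M n Mcal fzero U.
Proof.
  intros Hs HU _ Hnat HV HVi _ _ _ _ Hp0 _ Hpd Hcd Hcp HX _ HXt _ EX EXt Mcal.
  destruct (Mof_has_pd Hnat 1 V HV) as [HMr HMv].
  destruct (Aof_spec n _ U (Mof_invertible Hnat V HVi)) as [MAr MAv].
  destruct (Aof_natural Hnat 1 V HU HV HVi) as [CAr CAv].
  destruct (CkM_has_pd n 1 X U HX) as [HXr HXv].
  destruct (CkM_has_pd n 1 Xt U HXt) as [HTr HTv].
  destruct (star_equation_solved n U sigma phi _ X Hpd EX) as [SXr SXv].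
  destruct (star_equation_solved n U sigma chi _ Xt Hcd EXt) as [STr STv].
  set (M := Mof n nat V) in *. set (A := Aof n M) in *.
  assert (Hchi : forall r v, U r v -> chi r v = Cdiv (RtoC (- sigma)) (cs cj (phi r v))).
  { intros r v Hu. rewrite Hcp, sconj_cs; auto. }
  split.
  - eapply has_pdr_M_ext.
    { apply has_pdr_M_mul; [apply has_pdr_M_mul|]; [|exact HMr|exact HXr].
      exact (nu_has_pdr_lincomb Hnat _ _ _ _ _ HTr STr). }
    intros r v Hu. unfold fadd, fscal, fmul, fzero. rewrite !sconj_cs.
    destruct (kappa_coefficients_cancel sigma cj (phi r v) (chi r v) Hs
                (Hp0 r v Hu) (Hpd r v Hu) (Hchi r v Hu)) as (E1 & E2 & _).
    eapply product_rule_terms_cancel with (k1 := C1) (k2 := C0);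
      [exact (CAr r v Hu) | exact (CAv r v Hu) | | exact (SXr r v Hu) | exact E1 | exact E2].
    intros i j Hi Hj. rewrite <- (MAr r v Hu i j Hi Hj). unfold fmul, madd, mscal. ring.
  - eapply has_pdv_M_ext.
    { apply has_pdv_M_mul; [apply has_pdv_M_mul|]; [|exact HMv|exact HXv].
      exact (nu_has_pdv_lincomb Hnat _ _ _ _ _ HTv STv). }
    intros r v Hu. unfold fadd, fscal, fmul, fzero. rewrite !sconj_cs.
    destruct (kappa_coefficients_cancel sigma cj (phi r v) (chi r v) Hs
                (Hp0 r v Hu) (Hpd r v Hu) (Hchi r v Hu)) as (E1 & _ & E3).
    eapply product_rule_terms_cancel with (k1 := C0) (k2 := C1);
      [exact (CAr r v Hu) | exact (CAv r v Hu) | | exact (SXv r v Hu) | exact E3 | exact E1].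
    intros i j Hi Hj. rewrite <- (MAv r v Hu i j Hi Hj). unfold fmul, madd, mscal. ring.
Qed.
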